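(* Let $u\le v$ in $S_n$, let $I$ be a strong hypercube decomposition of $[u,v]$ with hypercube maps $\theta_x$, and let $\prec$ be a reflection order satisfying (E1) relative to $I$. Then every increasing path from $u$ to $v$ in the Bruhat graph ends with a sequence of the form $$\cdots\to x\to\theta_x(\{y_1\})\to\theta_x(\{y_1,y_2\})\to\cdots\to\theta_x(\{y_1,\dots,y_k\})$$ for some $x\in I$ and some $\{y_1,\dots,y_k\}\in\mathcal{A}_x$.
   Context: $S_n$ is the symmetric group with simple reflections $s_i=(i\ i{+}1)$, length $\ell$, and $T$ the set of transpositions. The Bruhat graph $\Gamma$ has vertex set $S_n$ and edges $w\xrightarrow{t}tw$ labelled $t$ whenever $t\in T$, $\ell(w)<\ell(tw)$; Bruhat order is reachability; $\Gamma(u,v)$ is the induced subgraph on $[u,v]$. A path is increasing if its edge labels are strictly increasing under $\prec$. A diamond is a subgraph of $\Gamma$ with four distinct vertices $x_1,\dots,x_4$ and edges $x_1\to x_2\to x_4$, $x_1\to x_3\to x_4$; $X\subset[u,v]$ is diamond-closed in $[u,v]$ if it contains the fourth vertex of any diamond in $[u,v]$ of which it contains three vertices. A reflection order is a total order $\prec$ on $T$ with, for all $a<b<c$, either $(a\,b)\prec(a\,c)\prec(b\,c)$ or $(b\,c)\prec(a\,c)\prec(a\,b)$. For an order ideal $I\subset[u,v]$ and $x\in I$, $\mathcal{Y}_x=\{y\in[u,v]\setminus I: x\to y\}$ and $\mathcal{A}_x$ is the set of Bruhat antichains contained in $\mathcal{Y}_x$, with $Y_1\to Y_2$ iff $Y_1\subset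 Y_2$, $|Y_2\setminus Y_1|=1$. A strong hypercube cluster at $x$ is a map $\theta_x:\mathcal{A}_x\to[u,v]$ with (HC1) $\theta_x(\varnothing)=x$; (HC2) $\theta_x(\{y\})=y$; (HC3) $Y_1\to Y_2$ implies $\theta_x(Y_1)\to\theta_x(Y_2)$ in $\Gamma$; (HC4) if $|Y|=|Y'|=|Y\cap Y'|+1$ and $\theta_x(Y\cap Y'),\theta_x(Y),\theta_x(Y'),w$ form a diamond in $\Gamma(u,v)$ with top $w$, then $Y\cup Y'$ is an antichain and $\theta_x(Y\cup Y')=w$. A strong hypercube decomposition of $[u,v]$ is an order ideal $I=[u,z]$ ($z\in[u,v]$) that is diamond-closed in $[u,v]$ and such that every $x\in I$ has a strong hypercube cluster relative to $I$. Condition (E1) relative to $I$: for each $x\in I$, if $x\xrightarrow{t_1}y_1$ and $x\xrightarrow{t_2}y_2$ with $y_1\in I$ and $y_2\in[u,v]\setminus I$, then $t_1\prec t_2$. *)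

(* S_n = {perm 'I_n}; a transposition (a b) with a < b is
   represented by the pair (a, b) : 'I_n * 'I_n. *)
From HB Require Import structures.
From mathcomp Require Import all_boot all_order all_fingroup.
Set Implicit Arguments. Unset Strict Implicit. Unset Printing Implicit Defensive.

Section Bruhat.
Variable n : nat.
Local Notation perm_n := {perm 'I_n}.
Local Notation refl := ('I_n * 'I_n)%type.

Definition inv_len (w : perm_n) : nat :=
  #|[set p : refl | (p.1 < p.2) && (w p.2 < w p.1)]|.

Definition is_refl (t : refl) : bool := t.1 < t.2.

(* tmul t w = t w  (left multiplication: (t w)(i) = t (w i));
   in MathComp (w * s) i = s (w i). *)
Definition tmul (t : refl) (w : perm_n) : perm_n := (w * tperm t.1 t.2)%g.

Definition bedge (w : perm_n) (t : refl) (x : perm_n) : bool :=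
  [&& is_refl t, x == tmul t w & inv_len w < inv_len x].

Definition bedge0 : rel perm_n := fun w x => [exists t, bedge w t x].

Definition bruhat_le (u v : perm_n) : bool := connect bedge0 u v.

Definition binterval (u v : perm_n) : {set perm_n} :=
  [set w | bruhat_le u w && bruhat_le w v].

Definition diamond (x1 x2 x3 x4 : perm_n) : bool :=
  [&& uniq [:: x1; x2; x3; x4], bedge0 x1 x2, bedge0 x2 x4,
      bedge0 x1 x3 & bedge0 x3 x4].

Definition diamond_in (u v x1 x2 x3 x4 : perm_n) : bool :=
  diamond x1 x2 x3 x4 && all (fun x => x \in binterval u v) [:: x1; x2; x3; x4].

Definition diamond_closed (u v : perm_n) (X : {set perm_n}) : Prop :=
  forall x1 x2 x3 x4, diamond_in u v x1 x2 x3 x4 ->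
    3 <= #|[set x in [:: x1; x2; x3; x4] | x \in X]| ->
    [set x1; x2; x3; x4] \subset X.

Definition Ycal (u v : perm_n) (I : {set perm_n}) (x : perm_n) : {set perm_n} :=
  [set y in binterval u v :\: I | bedge0 x y].

Definition bantichain (Y : {set perm_n}) : bool :=
  [forall y in Y, forall y' in Y, (y != y') ==> ~~ bruhat_le y y'].

Definition in_Acal (u v : perm_n) (I : {set perm_n}) (x : perm_n)
  (Y : {set perm_n}) : bool := (Y \subset Ycal u v I x) && bantichain Y.

Definition cover_step (Y1 Y2 : {set perm_n}) : bool :=
  (Y1 \subset Y2) && (#|Y2 :\: Y1| == 1).

(* strong hypercube cluster at x: theta : A_x -> [u,v]
   (theta is a total function; only its values on A_x matter) *)
Definition strong_cluster (u v : perm_n) (I : {set perm_n}) (x : perm_n)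
  (theta : {set perm_n} -> perm_n) : Prop :=
  [/\ forall Y, in_Acal u v I x Y -> theta Y \in binterval u v,
      theta set0 = x,
      forall y, y \in Ycal u v I x -> theta [set y] = y,
      forall Y1 Y2, in_Acal u v I x Y1 -> in_Acal u v I x Y2 ->
        cover_step Y1 Y2 -> bedge0 (theta Y1) (theta Y2)
    & forall Y Y' w, in_Acal u v I x Y -> in_Acal u v I x Y' ->
        #|Y| = #|Y'| -> #|Y| = #|Y :&: Y'|.+1 ->
        diamond_in u v (theta (Y :&: Y')) (theta Y) (theta Y') w ->
        bantichain (Y :|: Y') /\ theta (Y :|: Y') = w].

(* I = [u,z] (z in [u,v]) is a strong hypercube decomposition of [u,v]
   with hypercube maps theta x *)
Definition strong_hypercube_decomposition (u v z : perm_n)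
  (theta : perm_n -> {set perm_n} -> perm_n) : Prop :=
  [/\ z \in binterval u v,
      diamond_closed u v (binterval u z)
    & forall x, x \in binterval u z ->
        strong_cluster u v (binterval u z) x (theta x)].

Definition reflection_order (ord : rel refl) : Prop :=
  [/\ forall t, is_refl t -> ~~ ord t t,
      forall t1 t2 t3, is_refl t1 -> is_refl t2 -> is_refl t3 ->
        ord t1 t2 -> ord t2 t3 -> ord t1 t3,
      forall t1 t2, is_refl t1 -> is_refl t2 -> t1 != t2 ->
        ord t1 t2 || ord t2 t1
    & forall a b c : 'I_n, a < b -> b < c ->
        (ord (a, b) (a, c) && ord (a, c) (b, c)) ||
        (ord (b, c) (a, c) && ord (a, c) (a, b))].

Definition E1 (ord : rel refl) (u v : perm_n) (I : {set perm_n}) : Prop :=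
  forall x t1 y1 t2 y2, x \in I -> bedge x t1 y1 -> bedge x t2 y2 ->
    y1 \in I -> y2 \in binterval u v :\: I -> ord t1 t2.

(* a path from w: list of steps (label, next vertex) *)
Fixpoint bpath (w : perm_n) (s : seq (refl * perm_n)) : bool :=
  if s is (t, x) :: s' then bedge w t x && bpath x s' else true.

Definition increasing_path (ord : rel refl) (u v : perm_n)
  (s : seq (refl * perm_n)) : bool :=
  [&& bpath u s, sorted ord (map fst s) & last u (map snd s) == v].

End Bruhat.

From mathcomp Require Import all_boot all_order all_fingroup zify.
Set Implicit Arguments. Unset Strict Implicit. Unset Printing Implicit Defensive.

(* Let x be the last vertex of the path lying in the order ideal I = [u,z]; all
   later vertices lie in [u,v] \ I.  It then suffices to show that an increasing
   path from x in I whose vertices avoid I visits theta_x(Y_1), theta_x(Y_2), ...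
   for a chain Y_1 < Y_2 < ... in A_x, which goes by induction on the length of
   the path, generalised over its last step.  If the path ends with
   w -> w1 -> b, where w = theta_x(Y) and w1 = theta_x(Y + y1), the three-term
   condition on reflection orders exchanges w -> w1 -> b for a path
   w -> a -> b with a <> w1 and a first label larger than that of w -> w1.
   Replacing the last step by w -> a keeps the path increasing and, by (E1) if
   w = x and because I is an order ideal otherwise, outside I; so by induction
   a = theta_x(Y + y2), and (HC4) applied to the diamond w, w1, a, b gives
   b = theta_x(Y + y1 + y2). *)

Ltac neq_ord := first [ done | by rewrite eq_sym | by rewrite -val_eqE /=; lia ].

Ltac ord_neq_to_nat :=
  repeat match goal with
  | H : is_true (?x != ?y) |- _ => revert H; rewrite -val_eqE /=; intro H
  end.

Ltac tperm_simpl :=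
  repeat (rewrite ?tpermL ?tpermR; match goal with
  | |- context [fun_of_perm (tperm ?x ?y) ?z] =>
      rewrite (@tpermD _ x y z); [|neq_ord|neq_ord]
  end); rewrite ?tpermL ?tpermR.

Lemma set_rcons (T : finType) (s : seq T) y : [set x in rcons s y] = y |: [set x in s].
Proof. by apply/setP => x; rewrite !inE mem_rcons inE. Qed.

Lemma card_set_uniq (T : finType) (s : seq T) : uniq s -> #|[set x in s]| = size s.
Proof. by rewrite cardsE => /card_uniqP. Qed.

Section BruhatGraph.
Variable n : nat.
Local Notation perm_n := {perm 'I_n}.
Local Notation refl := ('I_n * 'I_n)%type.

Lemma inv_len_tpermM_lt (w : perm_n) (P Q : 'I_n) :
  P < Q -> w P < w Q -> inv_len w < inv_len (tperm P Q * w).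
Proof.
move=> ltPQ ltwPQ.
pose inside (i : 'I_n) := P < i < Q.
pose phi (p : refl) :=
  if inside p.1 || inside p.2 then p else (tperm P Q p.1, tperm P Q p.2).
have inside_tperm i : inside (tperm P Q i) = inside i.
  by rewrite /inside; case: (tpermP P Q i) => [->|->|//]; lia.
have phiK : involutive phi.
  move=> p; rewrite {2}/phi; case: ifP => [range|out]; first by rewrite /phi range.
  by rewrite /phi /= !inside_tperm out !tpermK -surjective_pairing.
rewrite /inv_len -(card_imset _ (inv_inj phiK)).
apply: proper_card; apply/properP; split.
  apply/subsetP => q /imsetP[[i j]]; rewrite inE /= => /andP[ij wji] ->{q}.
  rewrite inE !permM /phi /inside /=.
  case: ifP => /= range; rewrite ?tpermK ?wji ?andbT;
  case: (tpermP P Q i) => [ei|ei|/eqP ? /eqP ?];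
  case: (tpermP P Q j) => [ej|ej|/eqP ? /eqP ?];
  rewrite ?ei ?ej in ij wji range *; ord_neq_to_nat; lia.
exists (P, Q); first by rewrite inE /= ltPQ !permM tpermL tpermR.
apply/imsetP => -[p]; rewrite inE => /andP[ltp _] Ep.
have : p = phi (P, Q) by rewrite Ep phiK.
by rewrite /phi /inside /= !ltnn andbF /= tpermL tpermR => Ep'; rewrite Ep' /= in ltp; lia.
Qed.

Lemma tmulE (a b : 'I_n) (w : perm_n) :
  tmul (a, b) w = (tperm (w^-1%g a) (w^-1%g b) * w)%g.
Proof. by rewrite /tmul -tpermJ conjgE invgK mulgA mulgKV. Qed.

Lemma tmulVE (t : refl) (w : perm_n) (i : 'I_n) :
  (tmul t w)^-1%g i = w^-1%g (tperm t.1 t.2 i).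
Proof. by rewrite /tmul invMg tpermV permM. Qed.

Lemma inv_len_tmul_lt (w : perm_n) (a b : 'I_n) : a < b ->
  (inv_len w < inv_len (tmul (a, b) w)) = (w^-1%g a < w^-1%g b).
Proof.
move=> ltab; rewrite tmulE.
case: (ltngtP (w^-1%g a) (w^-1%g b)) => [lt|gt|/val_inj/perm_inj eq_ab].
- by apply: inv_len_tpermM_lt; rewrite // !permKV.
- apply/negbTE; rewrite -leqNgt ltnW //.
  set w' := (tperm _ _ * w)%g.
  have -> : w = (tperm (w^-1%g b) (w^-1%g a) * w')%g.
    by rewrite /w' tpermC mulgA tperm2 mul1g.
  by apply: inv_len_tpermM_lt; rewrite // /w' !permM tpermL tpermR !permKV.
- by rewrite eq_ab ltnn in ltab.
Qed.

Lemma bedgeE (w x : perm_n) (a b : 'I_n) :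
  bedge w (a, b) x = [&& a < b, x == tmul (a, b) w & w^-1%g a < w^-1%g b].
Proof.
rewrite /bedge /is_refl /=; case: (ltnP a b) => //= ltab.
by case: eqP => //= ->; rewrite inv_len_tmul_lt.
Qed.

Lemma tmul_inj (w : perm_n) (t t' : refl) : is_refl t -> is_refl t' ->
  tmul t w = tmul t' w -> t = t'.
Proof.
case: t t' => [x y] [x' y']; rewrite /is_refl /tmul /= => ltxy ltxy' /mulgI eq_t.
have : tperm x' y' x = y by rewrite -eq_t tpermL.
case: tpermP => [-> -> // | eq_xy' eq_x'y | _ _ eq_xy].
- by rewrite eq_xy' -eq_x'y in ltxy; lia.
- by rewrite eq_xy ltnn in ltxy.
Qed.

Lemma tperm_conj (a b x y : 'I_n) :
  tperm (tperm a b x) (tperm a b y) = (tperm a b * tperm x y * tperm a b)%g.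
Proof. by rewrite -(tpermJ x y) conjgE tpermV mulgA. Qed.

Lemma bedge_bedge0 (w x : perm_n) t : bedge w t x -> bedge0 w x.
Proof. by move=> e; apply/existsP; exists t. Qed.

Lemma bedge0_inv_len (w x : perm_n) : bedge0 w x -> inv_len w < inv_len x.
Proof. by case/existsP => t /and3P[]. Qed.

Lemma bedge_bruhat_le (w x : perm_n) t : bedge w t x -> bruhat_le w x.
Proof. by move/bedge_bedge0/connect1. Qed.

Lemma diamond_of_edges (x1 x2 x3 x4 : perm_n) :
  bedge0 x1 x2 -> bedge0 x2 x4 -> bedge0 x1 x3 -> bedge0 x3 x4 -> x2 != x3 ->
  diamond x1 x2 x3 x4.
Proof.
move=> e12 e24 e13 e34 ne23; rewrite /diamond e12 e24 e13 e34 !andbT /=.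
have ne (p q : perm_n) : inv_len p < inv_len q -> p != q.
  by move=> lt; apply/eqP => eq_pq; rewrite eq_pq ltnn in lt.
have l12 := bedge0_inv_len e12; have l24 := bedge0_inv_len e24.
rewrite !inE !negb_or ne23 (ne _ _ l12) (ne _ _ (bedge0_inv_len e13)) (ne _ _ l24).
by rewrite (ne _ _ (bedge0_inv_len e34)) (ne _ _ (ltn_trans l12 l24)).
Qed.

Lemma binterval_subset (u v z : perm_n) :
  bruhat_le z v -> {subset binterval u z <= binterval u v}.
Proof. by move=> zv w; rewrite !inE => /andP[-> wz]; exact: connect_trans wz zv. Qed.

Lemma binterval_notin_le (u z w a : perm_n) :
  bruhat_le u w -> w \notin binterval u z -> bruhat_le w a -> a \notin binterval u z.
Proof.
move=> uw + wa; apply: contra; rewrite !inE uw => /andP[_ az].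
exact: connect_trans wa az.
Qed.

Lemma bpath_rcons (w : perm_n) (s : seq (refl * perm_n)) p :
  bpath w (rcons s p) = bpath w s && bedge (last w (map snd s)) p.1 p.2.
Proof.
elim: s w => [|[t y] s IH] w /=; first by case: p => t y /=; rewrite andbT.
by rewrite IH andbA.
Qed.

Lemma bpath_is_refl (w : perm_n) (s : seq (refl * perm_n)) :
  bpath w s -> all (@is_refl n) (map fst s).
Proof. by elim: s w => [|[t y] s IH] w //= /andP[/and3P[-> _ _] /IH]. Qed.

Lemma bpath_bruhat_le (w : perm_n) (s : seq (refl * perm_n)) : bpath w s ->
  all (fun x => bruhat_le w x && bruhat_le x (last w (map snd s))) (map snd s).
Proof.
elim: s w => [|[t y] s IH] w //= /andP[e /IH vertices_y].
have wy := bedge_bruhat_le e.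
have y_last : bruhat_le y (last y (map snd s)).
  case/lastP: (map snd s) vertices_y => [|l x]; first by move=> _; exact: connect0.
  by rewrite last_rcons all_rcons => /andP[/andP[]].
rewrite wy y_last; apply/allP => x /(allP vertices_y)/andP[yx ->].
by rewrite andbT; exact: connect_trans wy yx.
Qed.

Definition theta_chain (th : {set perm_n} -> perm_n) (ys : seq perm_n) :=
  [seq th [set y in take i ys] | i <- iota 1 (size ys)].

Lemma theta_chain_rcons th ys y :
  theta_chain th (rcons ys y) = rcons (theta_chain th ys) (th [set y0 in rcons ys y]).
Proof.
rewrite /theta_chain size_rcons -[(size ys).+1]addn1 iotaD map_cat cats1 add1n.
rewrite -(size_rcons ys y) take_size.
congr rcons; apply/eq_in_map => i; rewrite mem_iota => /andP[_ lti].
by rewrite -cats1 takel_cat // -ltnS -add1n.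
Qed.

Lemma theta_chain_last th ys : last (th set0) (theta_chain th ys) = th [set y in ys].
Proof.
case/lastP: ys => [|ys y]; last by rewrite theta_chain_rcons last_rcons.
by congr th; apply/setP => y; rewrite !inE.
Qed.

Lemma in_Acal_subset u v I x (Y Y' : {set perm_n}) :
  Y \subset Y' -> in_Acal u v I x Y' -> in_Acal u v I x Y.
Proof.
move=> sYY' /andP[sY'Ycal anti]; rewrite /in_Acal (subset_trans sYY' sY'Ycal) /=.
apply/forall_inP => y yY; apply/forall_inP => y' y'Y.
by move/forall_inP: anti => /(_ y (subsetP sYY' _ yY))/forall_inP; apply; apply: (subsetP sYY').
Qed.

Lemma in_Acal1 u v I x (y : perm_n) : y \in Ycal u v I x -> in_Acal u v I x [set y].
Proof.
move=> yY; rewrite /in_Acal sub1set yY; apply/forall_inP => y1; rewrite inE => /eqP->.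
by apply/forall_inP => y2; rewrite inE => /eqP->; rewrite eqxx.
Qed.

Lemma in_Acal_nil u v I (x : perm_n) : in_Acal u v I x [set y in [::]].
Proof.
by apply/andP; split; [apply/subsetP | apply/forall_inP] => y; rewrite inE.
Qed.

End BruhatGraph.

Section ReflectionOrder.
Variables (n : nat) (ord : rel ('I_n * 'I_n)).
Hypothesis ord_refl : reflection_order ord.
Local Notation perm_n := {perm 'I_n}.

Lemma ord_trans t1 t2 t3 : ord t1 t2 -> ord t2 t3 ->
  is_refl t1 -> is_refl t2 -> is_refl t3 -> ord t1 t3.
Proof. by case: ord_refl => _ tr _ _ o12 o23 r1 r2 r3; apply: (tr _ t2). Qed.

Lemma ord_irr t : is_refl t -> ord t t = false.
Proof. by case: ord_refl => irr _ _ _ /irr/negbTE. Qed.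

Lemma ord_asym t1 t2 : is_refl t1 -> is_refl t2 -> ord t1 t2 -> ord t2 t1 = false.
Proof.
move=> r1 r2 o12; apply/negP => o21.
by move: (ord_irr r1); rewrite (ord_trans o12 o21).
Qed.

Ltac refl_tac := rewrite /is_refl /=; lia.

(* For a < b < c the pairs (a b) and (b c) are the two extremes of the triple. *)
Lemma ord_three_ab (a b c : 'I_n) : a < b -> b < c ->
  ord (a, b) (a, c) = ord (a, b) (b, c).
Proof.
move=> ltab ltbc.
have [rab rac rbc] : [/\ is_refl (a, b), is_refl (a, c) & is_refl (b, c)] by split; refl_tac.
case: ord_refl => _ _ _ /(_ a b c ltab ltbc) /orP[] /andP[o1 o2].
  by rewrite o1 (ord_trans o1 o2).
by rewrite (ord_asym rac rab o2) (ord_asym rbc rab (ord_trans o1 o2 rbc rac rab)).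
Qed.

Lemma ord_three_bc (a b c : 'I_n) : a < b -> b < c ->
  ord (b, c) (a, c) = ord (b, c) (a, b).
Proof.
move=> ltab ltbc.
have [rab rac rbc] : [/\ is_refl (a, b), is_refl (a, c) & is_refl (b, c)] by split; refl_tac.
case: ord_refl => _ _ _ /(_ a b c ltab ltbc) /orP[] /andP[o1 o2].
  by rewrite (ord_asym rac rbc o2) (ord_asym rab rbc (ord_trans o1 o2 rab rac rbc)).
by rewrite o1 (ord_trans o1 o2).
Qed.

(* With P = w^-1, t1 = (a1 b1) and t2 = (a2 b2), the alternatives describe the
   paths w -> t2 w -> t2 t1 w and w -> r w -> t1 r w = t2 t1 w, r = t1 t2 t1. *)
Lemma reflection_order_exchange (P : perm_n) (a1 b1 a2 b2 : 'I_n) :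
  a1 < b1 -> a2 < b2 -> P a1 < P b1 -> P (tperm a1 b1 a2) < P (tperm a1 b1 b2) ->
  ord (a1, b1) (a2, b2) ->
  (tperm a2 b2 a1 < tperm a2 b2 b1 /\ P a2 < P b2) \/
  [/\ tperm a1 b1 a2 < tperm a1 b1 b2,
      P (tperm (tperm a1 b1 a2) (tperm a1 b1 b2) a1)
        < P (tperm (tperm a1 b1 a2) (tperm a1 b1 b2) b1)
    & ord (a1, b1) (tperm a1 b1 a2, tperm a1 b1 b2)].
Proof.
move=> lt1 lt2 p1 p2 o12.
case: (eqVneq a2 a1) => [eq_a | ne_a].
  subst a2; case: (ltngtP b1 b2) => [lt_b | lt_b | /val_inj eq_b];
    last by subst; rewrite ord_irr in o12.
  all: move: p2; tperm_simpl => p2.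
  - by right; tperm_simpl; split; [lia | lia | rewrite -ord_three_ab].
  - by left; tperm_simpl; split => //; lia.
case: (eqVneq b2 b1) => [eq_b | ne_b].
  subst b2; case: (ltngtP a1 a2) => [lt_a | lt_a | /val_inj eq_a];
    last by subst; rewrite eqxx in ne_a.
  all: move: p2; tperm_simpl => p2.
  - by left; tperm_simpl; split => //; lia.
  - by right; tperm_simpl; split; [lia | lia | rewrite -ord_three_bc].
case: (eqVneq a2 b1) => [eq_ab | ne_ab].
  subst a2; move: p2; tperm_simpl => p2.
  case: (ltngtP (P b1) (P b2)) => [lt_p | lt_p | /val_inj/perm_inj eq_p].
  - by left; tperm_simpl; split => //; lia.
  - by right; tperm_simpl; split; [lia | lia | rewrite ord_three_ab].
  - by subst; rewrite ltnn in lt2.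
case: (eqVneq b2 a1) => [eq_ba | ne_ba].
  subst b2; move: p2; tperm_simpl => p2.
  case: (ltngtP (P a1) (P a2)) => [lt_p | lt_p | /val_inj/perm_inj eq_p].
  - by right; tperm_simpl; split; [lia | lia | rewrite ord_three_bc].
  - by left; tperm_simpl; split => //; lia.
  - by subst; rewrite ltnn in lt2.
by left; move: p2; tperm_simpl.
Qed.

Lemma bedge_exchange (w w1 c : perm_n) t1 t2 :
  bedge w t1 w1 -> bedge w1 t2 c -> ord t1 t2 ->
  exists t' a t'', [/\ bedge w t' a, bedge a t'' c, a != w1 & ord t1 t'].
Proof.
case: t1 t2 => [a1 b1] [a2 b2].
rewrite !bedgeE => /and3P[lt1 /eqP-> p1] /and3P[lt2 /eqP-> p2] o12.
rewrite !tmulVE /= in p2.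
have ne_tmul t : is_refl t -> ord (a1, b1) t -> tmul t w != tmul (a1, b1) w.
  by move=> rt o; apply: contraTneq o => /tmul_inj-> //; rewrite ord_irr.
case: (reflection_order_exchange lt1 lt2 p1 p2 o12) => [[lt p] | [lt p o]].
- exists (a2, b2), (tmul (a2, b2) w), (tperm a2 b2 a1, tperm a2 b2 b1); split.
  + by rewrite bedgeE lt2 eqxx p.
  + rewrite bedgeE lt !tmulVE /= !tpermK p1 andbT.
    by rewrite /tmul /= tperm_conj !mulgA -(mulgA w (tperm a2 b2)) tperm2 mulg1.
  + exact: ne_tmul.
  + exact: o12.
- exists (tperm a1 b1 a2, tperm a1 b1 b2), (tmul (tperm a1 b1 a2, tperm a1 b1 b2) w), (a1, b1).
  split; [by rewrite bedgeE lt eqxx | | exact: ne_tmul | exact: o].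
  rewrite bedgeE lt1 !tmulVE /= p andbT.
  by rewrite /tmul /= tperm_conj !mulgA -(mulgA _ (tperm a1 b1) (tperm a1 b1)) tperm2 mulg1.
Qed.

End ReflectionOrder.

Section HypercubeChains.
Variable n : nat.
Local Notation perm_n := {perm 'I_n}.
Local Notation refl := ('I_n * 'I_n)%type.
Variables (u v z : perm_n) (theta : perm_n -> {set perm_n} -> perm_n) (ord : rel refl).
Hypothesis decomp : strong_hypercube_decomposition u v z theta.
Hypothesis ord_refl : reflection_order ord.
Hypothesis ordE1 : E1 ord u v (binterval u z).

Local Notation I := (binterval u z).
Local Notation D := (binterval u v :\: binterval u z).

Lemma ideal_subset : {subset I <= binterval u v}.
Proof. by case: decomp; rewrite inE => /andP[_ zv] _ _; exact: binterval_subset. Qed.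

Lemma cluster_at x : x \in I -> strong_cluster u v I x (theta x).
Proof. by case: decomp => _ _; apply. Qed.

Definition cluster_walk x (ys ws : seq perm_n) :=
  [/\ uniq ys, in_Acal u v I x [set y in ys] & ws = theta_chain (theta x) ys].

Definition outside_path x (s : seq (refl * perm_n)) :=
  [&& bpath x s, sorted ord (map fst s) & all [in D] (map snd s)].

Lemma outside_path_rcons x s p : outside_path x (rcons s p) -> outside_path x s.
Proof.
rewrite /outside_path bpath_rcons !map_rcons all_rcons.
case/and3P=> [/andP[-> _] sorted_s /andP[_ ->]].
by case: (map fst s) sorted_s => //= t ts; rewrite andbT rcons_path => /andP[].
Qed.

Lemma exchange_outside w t w1 t' a t'' c :
  w \in binterval u v -> bedge w t w1 -> w1 \in D ->
  bedge w t' a -> bedge a t'' c -> c \in D -> ord t t' -> a \in D.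
Proof.
move=> wuv e1 w1D ea eb cD o.
have uw : bruhat_le u w by move: wuv; rewrite inE => /andP[].
have cv : bruhat_le c v by move: cD; rewrite in_setD !inE => /andP[_ /andP[]].
have ua : bruhat_le u a := connect_trans uw (bedge_bruhat_le ea).
have av : bruhat_le a v := connect_trans (bedge_bruhat_le eb) cv.
rewrite in_setD [a \in binterval u v]inE ua av !andbT.
case: (boolP (w \in I)) => wI; last exact: binterval_notin_le uw wI (bedge_bruhat_le ea).
apply/negP => aI; have o' := ordE1 wI ea e1 aI w1D.
have [r r'] : is_refl t /\ is_refl t' by case/and3P: e1; case/and3P: ea.
by rewrite (ord_asym ord_refl r r' o) in o'.
Qed.

Lemma cluster_diamond x (ys : seq perm_n) y1 y2 b :
  x \in I -> uniq (rcons ys y1) -> uniq (rcons ys y2) ->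
  in_Acal u v I x [set y in rcons ys y1] -> in_Acal u v I x [set y in rcons ys y2] ->
  diamond_in u v (theta x [set y in ys]) (theta x [set y in rcons ys y1])
                 (theta x [set y in rcons ys y2]) b ->
  [/\ uniq (rcons (rcons ys y1) y2), in_Acal u v I x [set y in rcons (rcons ys y1) y2]
    & theta x [set y in rcons (rcons ys y1) y2] = b].
Proof.
move=> xI uniq1 uniq2 A1 A2 dia.
have ne12 : y1 != y2.
  by apply: contraTneq dia => <-; rewrite /diamond_in /diamond /= !inE eqxx /= !andbF.
have capE : [set y in rcons ys y1] :&: [set y in rcons ys y2] = [set y in ys].
  apply/setP => y; rewrite !set_rcons !inE.
  by case: (boolP (y \in ys)); rewrite ?orbT ?orbF //; case: eqP => // ->; rewrite (negbTE ne12).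
have cupE : [set y in rcons ys y1] :|: [set y in rcons ys y2] = [set y in rcons (rcons ys y1) y2].
  by apply/setP => y; rewrite !set_rcons !inE orbCA -!orbA orbb.
have card1 := card_set_uniq uniq1; have card2 := card_set_uniq uniq2.
rewrite !size_rcons in card1 card2.
have card12 : #|[set y in rcons ys y1] :&: [set y in rcons ys y2]| = size ys.
  by rewrite capE card_set_uniq //; move: uniq1; rewrite rcons_uniq => /andP[].
case: (cluster_at xI) => _ _ _ _ /(_ _ _ b A1 A2) hc4.
rewrite -capE in dia; rewrite -cupE.
have [anti ->] := hc4 (etrans card1 (esym card2)) (etrans card1 (congr1 S (esym card12))) dia.
split => //.
- rewrite rcons_uniq uniq1 mem_rcons inE negb_or eq_sym ne12 andbT.
  by move: uniq2; rewrite rcons_uniq => /andP[].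
- by rewrite /in_Acal subUset anti andbT; case/andP: A1 => -> _; case/andP: A2.
Qed.

Lemma outside_path_last2 x s tp w1 t b :
  outside_path x (rcons (rcons s (tp, w1)) (t, b)) ->
  [/\ bedge (last x (map snd s)) tp w1, bedge w1 t b, ord tp t, w1 \in D & b \in D].
Proof.
rewrite /outside_path !bpath_rcons !map_rcons !all_rcons !last_rcons /=.
case/and3P=> [/andP[/andP[_ e1] e2] sorted2 /and3P[bD w1D _]]; split => //.
move: sorted2; case: (map fst s) => [|t0 ts] /=; first by rewrite andbT.
by rewrite rcons_path last_rcons => /andP[].
Qed.

Lemma outside_path_last_in x s :
  x \in I -> outside_path x s -> last x (map snd s) \in binterval u v.
Proof.
move=> xI /and3P[_ _ /allP inD]; case/predU1P: (mem_last x (map snd s)) => [-> | /inD].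
  exact: ideal_subset.
by rewrite in_setD => /andP[].
Qed.

Lemma outside_path_replace_last x s tp w1 t' a :
  outside_path x (rcons s (tp, w1)) -> bedge (last x (map snd s)) t' a ->
  ord tp t' -> a \in D -> outside_path x (rcons s (t', a)).
Proof.
rewrite /outside_path !bpath_rcons !map_rcons !all_rcons /=.
case/and3P=> [/andP[ps e1] sorted1 /andP[_ Ds]] ea o aD; rewrite ps ea aD Ds /= andbT.
have [r1 r'] : is_refl tp /\ is_refl t' by case/and3P: e1; case/and3P: ea.
case: (map fst s) sorted1 (bpath_is_refl ps) => //= t0 ts; rewrite !rcons_path.
case/andP=> -> o0 rs /=; apply: (ord_trans ord_refl o0 o) => //.
by apply: (allP (rs : all (@is_refl n) (t0 :: ts))); apply: mem_last.
Qed.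

Lemma cluster_walk_rcons x s t b ys : x \in I ->
  outside_path x (rcons s (t, b)) -> cluster_walk x ys (map snd s) ->
  exists y, cluster_walk x (rcons ys y) (map snd (rcons s (t, b))).
Proof.
move=> xI; have [_ theta0 theta1 _ _] := cluster_at xI.
elim/last_ind: s t b ys => [|s [tp w1] IH] t b ys path_b [uniq_ys A_ys chain_ys].
  case: ys chain_ys {uniq_ys A_ys} => // _.
  have bY : b \in Ycal u v I x.
    by case/and3P: path_b => /= /andP[e _] _ /andP[bD _]; rewrite inE bD (bedge_bedge0 e).
  have set_b : [set y in [:: b]] = [set b] by apply/setP => y; rewrite !inE.
  by exists b; rewrite /cluster_walk /theta_chain /= set_b theta1 // in_Acal1.
case/lastP: ys uniq_ys A_ys chain_ys => [|ys yl] uniq_ys A_ys.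
  by move/(congr1 size); rewrite size_map size_rcons.
rewrite map_rcons theta_chain_rcons => /rcons_inj[chain_s w1E].
have [e1 e2 o w1D bD] := outside_path_last2 path_b.
have wuv := outside_path_last_in xI (outside_path_rcons (outside_path_rcons path_b)).
have wE : last x (map snd s) = theta x [set y in ys].
  by rewrite chain_s -{1}theta0 theta_chain_last.
have [t' [a [t'' [ea eb ne_a o']]]] := bedge_exchange ord_refl e1 e2 o.
have aD := exchange_outside wuv e1 w1D ea eb bD o'.
have walk_ys : cluster_walk x ys (map snd s).
  split => //; first by move: uniq_ys; rewrite rcons_uniq => /andP[].
  by apply: in_Acal_subset A_ys; rewrite set_rcons subsetUr.
have path_a := outside_path_replace_last (outside_path_rcons path_b) ea o' aD.
have [y' [uniq' A' chain']] := IH t' a ys path_a walk_ys.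
move: chain'; rewrite map_rcons theta_chain_rcons => /rcons_inj[_ aE].
have dia : diamond_in u v (theta x [set y in ys]) (theta x [set y in rcons ys yl])
                         (theta x [set y in rcons ys y']) b.
  have dia_edges := diamond_of_edges (bedge_bedge0 e1) (bedge_bedge0 e2)
    (bedge_bedge0 ea) (bedge_bedge0 eb).
  rewrite -wE -w1E -aE /diamond_in dia_edges 1?eq_sym //=.
  move: w1D aD bD; rewrite !in_setD => /andP[_ ->] /andP[_ ->] /andP[_ ->].
  by rewrite !andbT.
have [uniq'' A'' theta_b] := cluster_diamond xI uniq_ys uniq' A_ys A' dia.
exists y'; split => //.
by rewrite !map_rcons !theta_chain_rcons theta_b -w1E chain_s.
Qed.

Lemma outside_path_cluster_walk x s : x \in I -> outside_path x s ->
  exists ys, cluster_walk x ys (map snd s).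
Proof.
move=> xI; elim/last_ind: s => [|s [t b] IH] path_s.
  by exists [::]; split => //; apply: in_Acal_nil.
have [ys walk_s] := IH (outside_path_rcons path_s).
have [y walk_b] := cluster_walk_rcons xI path_s walk_s.
by exists (rcons ys y).
Qed.

Lemma bpath_exit_outside w t y s : w \in I -> y \notin I ->
  bpath w ((t, y) :: s) -> last y (map snd s) = v -> all [in D] (y :: map snd s).
Proof.
move=> wI yI path_y last_v.
have uw : bruhat_le u w by move: wI; rewrite inE => /andP[].
have /andP[e path_s] := path_y.
have uy : bruhat_le u y := connect_trans uw (bedge_bruhat_le e).
apply/allP => p p_in; have /andP[wp pv] := allP (bpath_bruhat_le path_y) p p_in.
have up : bruhat_le u p := connect_trans uw wp.
rewrite /= last_v in pv; rewrite in_setD [p \in binterval u v]inE up pv !andbT.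
case/predU1P: p_in => [-> // | p_s].
by have /andP[yp _] := allP (bpath_bruhat_le path_s) p p_s; apply: binterval_notin_le uy yI yp.
Qed.

Lemma increasing_path_cluster_suffix w s : w \in I ->
  bpath w s -> sorted ord (map fst s) -> last w (map snd s) = v ->
  exists x, x \in I /\ exists ys : seq perm_n,
    [/\ uniq ys, in_Acal u v I x [set y in ys] &
        suffix (x :: theta_chain (theta x) ys) (w :: map snd s)].
Proof.
elim: s w => [|[t y] s IH] w wI path_s sorted_s last_v.
  exists w; split => //; exists [::]; split => //=; last exact: suffix_refl.
  exact: in_Acal_nil.
have /andP[e path_y] := path_s.
case: (boolP (y \in I)) => yI.
  have [x [xI [ys [uniq_ys A_ys suffix_y]]]] := IH y yI path_y (path_sorted sorted_s) last_v.
  by exists x; split => //; exists ys; split => //; apply: suffix_trans suffix_y (suffix_cons _ _).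
have path_w : outside_path w ((t, y) :: s).
  by rewrite /outside_path path_s sorted_s (bpath_exit_outside wI yI path_s last_v).
have [ys [uniq_ys A_ys chain_ys]] := outside_path_cluster_walk wI path_w.
by exists w; split => //; exists ys; rewrite -chain_ys suffix_refl.
Qed.

End HypercubeChains.

Theorem lemma3p14 (n : nat) (u v z : {perm 'I_n})
  (theta : {perm 'I_n} -> {set {perm 'I_n}} -> {perm 'I_n})
  (ord : rel ('I_n * 'I_n))
  (s : seq (('I_n * 'I_n) * {perm 'I_n})) :
  bruhat_le u v ->
  strong_hypercube_decomposition u v z theta ->
  reflection_order ord ->
  E1 ord u v (binterval u z) ->
  increasing_path ord u v s ->
  exists x, x \in binterval u z /\
    exists ys : seq {perm 'I_n},
      [/\ uniq ys, in_Acal u v (binterval u z) x [set y in ys] &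
          suffix (x :: [seq theta x [set y in take i ys] | i <- iota 1 (size ys)])
                 (u :: map snd s)].
Proof.
move=> _ decomp ord_refl ordE1 /and3P[path_s sorted_s /eqP last_v].
have uI : u \in binterval u z.
  by case: decomp; rewrite inE => /andP[uz _] _ _; rewrite inE uz andbT; exact: connect0.
by apply: (increasing_path_cluster_suffix decomp ord_refl ordE1 uI).
Qed.
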